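(* Fix a valid ILA model and a secret parameter $\mathsf{sp}\in\mathcal{SP}$. Suppose $\mathsf{topub}(\mathsf{sp});\Gamma\vdash e:\tau$ and $\mathsf{sp};\Gamma\vDash\gamma$. Then there are values $v$ and $v_{\mathsf{msg}}$ with $\langle\gamma,e\rangle\Downarrow v$ and $\langle\mathsf{interp}^{\mathsf{sp}}_\Gamma(\gamma),e\rangle\Downarrow^{\mathsf{sp}}_{\mathsf{msg}}v_{\mathsf{msg}}$ such that $\mathsf{interp}^{\mathsf{sp}}_{\mathsf{sort}(v)}(v)=v_{\mathsf{msg}}$.
   Context: An ILA model consists of: sets $\mathcal{PP}$ (public parameters) and $\mathcal{SP}$ (secret parameters) with a map $\mathsf{topub}:\mathcal{SP}\to\mathcal{PP}$; for each sort $s\in\{\mathsf{msg},\mathsf{plain},\mathsf{cipher}\}$ a carrier set $[\![s]\!]$ (the sort of a value $v$, written $\mathsf{sort}(v)$, is the $s$ with $v\in[\![s]\!]$) and a partially ordered set $(B_s,\le_s)$ of bounds; maps $|\cdot|^{\mathsf{pp}}_{\mathsf{msg}}:[\![\mathsf{msg}]\!]\to B_{\mathsf{msg}}$, $|\cdot|^{\mathsf{pp}}_{\mathsf{plain}}:[\![\mathsf{plain}]\!]\to B_{\mathsf{plain}}$ for $\mathsf{pp}\in\mathcal{PP}$, and $|\cdot|^{\mathsf{sp}}_{\mathsf{cipher}}:[\![\mathsf{cipher}]\!]\to B_{\mathsf{cipher}}$ for $\mathsf{sp}\in\mathcal{SP}$ (for $s\in\{\mathsf{msg},\mathsf{plain}\}$,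 $|\cdot|^{\mathsf{sp}}_s$ means $|\cdot|^{\mathsf{topub}(\mathsf{sp})}_s$); interpretation maps $\mathsf{interp}^{\mathsf{pp}}_{\mathsf{plain}}:[\![\mathsf{plain}]\!]\to[\![\mathsf{msg}]\!]$ (decoding), $\mathsf{interp}^{\mathsf{sp}}_{\mathsf{cipher}}:[\![\mathsf{cipher}]\!]\to[\![\mathsf{msg}]\!]$ (decryption), with $\mathsf{interp}^{\mathsf{pp}}_{\mathsf{msg}}$ the identity and $\mathsf{interp}^{\mathsf{sp}}_s:=\mathsf{interp}^{\mathsf{topub}(\mathsf{sp})}_s$ for $s\in\{\mathsf{msg},\mathsf{plain}\}$; and a set of operations, each $\mathsf{op}$ having an arity $s_1,\dots,s_n\to s$ and equipped with a total function $[\![\mathsf{op}]\!]:\prod_i[\![s_i]\!]\to[\![s]\!]$, a partial function $[\![\mathsf{op}]\!]^{\mathsf{pp}}_{\mathsf{bnd}}:\prod_i B_{s_i}\rightharpoonup B_s$ for each $\mathsf{pp}$, and a function $[\![\mathsf{op}]\!]_{\mathsf{msg}}:[\![\mathsf{msg}]\!]^n\to[\![\mathsf{msg}]\!]$. The model is valid if (Commutativity) for all $\mathsf{sp}$, all $\mathsf{op}:\vec s_i\to s$ and all $v_i\in[\![s_i]\!]$, if $[\![\mathsf{op}]\!]^{\mathsf{topub}(\mathsf{sp})}_{\mathsf{bnd}}(|v_1|^{\mathsf{sp}}_{s_1},\dots)=b$ is defined then $|[\![\mathsf{op}]\!](\vec v_i)|^{\mathsf{sp}}_s\le_s b$ and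 $\mathsf{interp}^{\mathsf{sp}}_s([\![\mathsf{op}]\!](\vec v_i))=[\![\mathsf{op}]\!]_{\mathsf{msg}}(\mathsf{interp}^{\mathsf{sp}}_{s_1}(v_1),\dots)$; and (Downwards Closed) if $[\![\mathsf{op}]\!]^{\mathsf{topub}(\mathsf{sp})}_{\mathsf{bnd}}(\vec b_i)=b$ is defined and $b_i'\le_{s_i}b_i$ for all $i$, then $[\![\mathsf{op}]\!]^{\mathsf{topub}(\mathsf{sp})}_{\mathsf{bnd}}(\vec b_i')=b'$ is defined with $b'\le_s b$. Expressions: $e::=x\mid v\mid\mathsf{op}(e_1,\dots,e_n)$ with $v\in[\![s]\!]$, $s\in\{\mathsf{msg},\mathsf{plain}\}$. A substitution $\gamma$ maps variables to values in $[\![\mathsf{msg}]\!]\cup[\![\mathsf{plain}]\!]\cup[\![\mathsf{cipher}]\!]$. Ordinary evaluation $\langle\gamma,e\rangle\Downarrow v$: $\langle\gamma,x\rangle\Downarrow\gamma(x)$; $\langle\gamma,v\rangle\Downarrow v$; if $\mathsf{op}:\vec s_i\to s$ and $\langle\gamma,e_i\rangle\Downarrow v_i\in[\![s_i]\!]$ for all $i$, then $\langle\gamma,\mathsf{op}(\vec e_i)\rangle\Downarrow[\![\mathsf{op}]\!](\vec v_i)$. Cleartext evaluation $\langle\gamma,e\rangle\Downarrow^{\mathsf{sp}}_{\mathsf{msg}}v$ (for substitutions into $[\![\mathsf{msg}]\!]$): $\langle\gamma,x\rangle\Downarrow^{\mathsf{sp}}_{\mathsf{msg}}\gamma(x)$;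 for $v\in[\![s]\!]$, $\langle\gamma,v\rangle\Downarrow^{\mathsf{sp}}_{\mathsf{msg}}\mathsf{interp}^{\mathsf{sp}}_s(v)$; if $\mathsf{op}:\vec s_i\to s$ and $\langle\gamma,e_i\rangle\Downarrow^{\mathsf{sp}}_{\mathsf{msg}}v_i$ for all $i$, then $\langle\gamma,\mathsf{op}(\vec e_i)\rangle\Downarrow^{\mathsf{sp}}_{\mathsf{msg}}[\![\mathsf{op}]\!]_{\mathsf{msg}}(\vec v_i)$. Types are $s\ \alpha$ with $\alpha\in B_s$; $|s\ \alpha|=\alpha$, $\mathsf{sort}(s\ \alpha)=s$; $s\ \alpha\le s\ \alpha'$ iff $\alpha\le_s\alpha'$. A context $\Gamma$ is a finite map from variables to types. Typing $\mathsf{pp};\Gamma\vdash e:\tau$: if $x:\tau\in\Gamma$ then $\mathsf{pp};\Gamma\vdash x:\tau$; if $\mathsf{pp};\Gamma\vdash e:\tau$ and $\tau\le\tau'$ then $\mathsf{pp};\Gamma\vdash e:\tau'$; if $\mathsf{sort}(v)=s$ then $\mathsf{pp};\Gamma\vdash v:s\ |v|^{\mathsf{pp}}_s$; if $\mathsf{op}:\vec s_i\to s$, $\mathsf{pp};\Gamma\vdash e_i:\tau_i$ with $\mathsf{sort}(\tau_i)=s_i$, and $[\![\mathsf{op}]\!]^{\mathsf{pp}}_{\mathsf{bnd}}(|\tau_1|,\dots,|\tau_n|)=\alpha$ is defined, then $\mathsf{pp};\Gamma\vdash\mathsf{op}(\vec e_i):s\ \alpha$. Semantic types: $[\![s\ \alpha]\!]^{\mathsf{sp}}=\{v\in[\![s]\!]\mid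 |v|^{\mathsf{sp}}_s\le_s\alpha\}$. $\mathsf{sp};\Gamma\vDash\gamma$ means: for every $x$ in the domain of $\Gamma$, $x$ is in the domain of $\gamma$ and $\gamma(x)\in[\![\Gamma(x)]\!]^{\mathsf{sp}}$. For such $\gamma$, $\mathsf{interp}^{\mathsf{sp}}_\Gamma(\gamma)$ is the substitution $\{x\mapsto\mathsf{interp}^{\mathsf{sp}}_{\mathsf{sort}(\Gamma(x))}(\gamma(x))\}$ over the variables $x$ of $\Gamma$. *)

From Stdlib Require Import List.
Set Implicit Arguments.

Inductive sort := Smsg | Splain | Scipher.

Fixpoint hprod (F : sort -> Type) (l : list sort) : Type :=
  match l with nil => unit | s :: l' => (F s * hprod F l')%type end.

Fixpoint hmap (F G : sort -> Type) (f : forall s, F s -> G s) (l : list sort)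
  : hprod F l -> hprod G l :=
  match l return hprod F l -> hprod G l with
  | nil => fun _ => tt
  | s :: l' => fun p => (f s (fst p), @hmap F G f l' (snd p))
  end.

Fixpoint hall2 (F : sort -> Type) (R : forall s, F s -> F s -> Prop) (l : list sort)
  : hprod F l -> hprod F l -> Prop :=
  match l return hprod F l -> hprod F l -> Prop with
  | nil => fun _ _ => True
  | s :: l' => fun p q => R s (fst p) (fst q) /\ @hall2 F R l' (snd p) (snd q)
  end.

Arguments hmap {F G} f {l} _.
Arguments hall2 {F} R {l} _ _.

Record ILA := {
  PP : Type;
  SP : Type;
  topub : SP -> PP;
  carrier : sort -> Type;
  B : sort -> Type;
  ble : forall s, B s -> B s -> Prop;
  ble_refl : forall s a, @ble s a a;
  ble_trans : forall s a b c, @ble s a b -> @ble s b c -> @ble s a c;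
  ble_antisym : forall s a b, @ble s a b -> @ble s b a -> a = b;
  norm_msg : PP -> carrier Smsg -> B Smsg;
  norm_plain : PP -> carrier Splain -> B Splain;
  norm_cipher : SP -> carrier Scipher -> B Scipher;
  interp_plain : PP -> carrier Splain -> carrier Smsg;
  interp_cipher : SP -> carrier Scipher -> carrier Smsg;
  op : Type;
  op_args : op -> list sort;
  op_res : op -> sort;
  op_sem : forall o, hprod carrier (op_args o) -> carrier (op_res o);
  op_bnd : forall o, PP -> hprod B (op_args o) -> option (B (op_res o));
  op_msg : forall o, hprod (fun _ => carrier Smsg) (op_args o) -> carrier Smsg
}.

Section Model.
Variable M : ILA.

Definition normsp (sp : SP M) (s : sort) : carrier M s -> B M s :=
  match s return carrier M s -> B M s with
  | Smsg => norm_msg M (topub M sp)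
  | Splain => norm_plain M (topub M sp)
  | Scipher => norm_cipher M sp
  end.

Arguments normsp sp {s} _.

Definition interp (sp : SP M) (s : sort) : carrier M s -> carrier M Smsg :=
  match s return carrier M s -> carrier M Smsg with
  | Smsg => fun m => m
  | Splain => interp_plain M (topub M sp)
  | Scipher => interp_cipher M sp
  end.

Arguments interp sp {s} _.

Definition valid : Prop :=
  (forall (sp : SP M) (o : op M) (vs : hprod (carrier M) (op_args M o)) b,
     op_bnd M o (topub M sp) (hmap (fun s => @normsp sp s) vs) = Some b ->
     ble M _ (normsp sp (op_sem M o vs)) b /\
     interp sp (op_sem M o vs) = op_msg M o (hmap (fun s => @interp sp s) vs))
  /\
  (forall (sp : SP M) (o : op M) (bs bs' : hprod (B M) (op_args M o)) b,
     op_bnd M o (topub M sp) bs = Some b ->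
     hall2 (ble M) bs' bs ->
     exists b', op_bnd M o (topub M sp) bs' = Some b' /\ ble M _ b' b).

Definition value := {s : sort & carrier M s}.
Definition vsort (v : value) : sort := projT1 v.

Definition var := nat.

Inductive expr :=
| EVar (x : var)
| EMsg (m : carrier M Smsg)
| EPlain (p : carrier M Splain)
| EOp (o : op M) (es : list expr).

Inductive eval (g : var -> option value) : expr -> value -> Prop :=
| ev_var x v : g x = Some v -> eval g (EVar x) v
| ev_msg m : eval g (EMsg m) (existT _ Smsg m)
| ev_plain p : eval g (EPlain p) (existT _ Splain p)
| ev_op o es (vs : hprod (carrier M) (op_args M o)) :
    evals g es (op_args M o) vs ->
    eval g (EOp o es) (existT _ (op_res M o) (op_sem M o vs))
with evals (g : var -> option value)
  : list expr -> forall l : list sort, hprod (carrier M) l -> Prop :=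
| evs_nil : evals g nil nil tt
| evs_cons e es s l (v : carrier M s) (vs : hprod (carrier M) l) :
    eval g e (existT _ s v) -> evals g es l vs -> evals g (e :: es) (s :: l) (v, vs).

Inductive ceval (sp : SP M) (g : var -> option (carrier M Smsg))
  : expr -> carrier M Smsg -> Prop :=
| cev_var x m : g x = Some m -> ceval sp g (EVar x) m
| cev_msg m : ceval sp g (EMsg m) (interp sp (s := Smsg) m)
| cev_plain p : ceval sp g (EPlain p) (interp sp (s := Splain) p)
| cev_op o es (ms : hprod (fun _ => carrier M Smsg) (op_args M o)) :
    cevals sp g es (op_args M o) ms ->
    ceval sp g (EOp o es) (op_msg M o ms)
with cevals (sp : SP M) (g : var -> option (carrier M Smsg))
  : list expr -> forall l : list sort, hprod (fun _ => carrier M Smsg) l -> Prop :=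
| cevs_nil : cevals sp g nil nil tt
| cevs_cons e es s l m (ms : hprod (fun _ => carrier M Smsg) l) :
    ceval sp g e m -> cevals sp g es l ms -> cevals sp g (e :: es) (s :: l) (m, ms).

Inductive ty := Ty (s : sort) (a : B M s).
Definition tsort (t : ty) : sort := let (s, _) := t in s.

Inductive tle : ty -> ty -> Prop :=
| tle_intro s (a a' : B M s) : ble M _ a a' -> tle (Ty s a) (Ty s a').

Definition ctx := var -> option ty.

Inductive typing (pp : PP M) (G : ctx) : expr -> ty -> Prop :=
| ty_var x t : G x = Some t -> typing pp G (EVar x) t
| ty_sub e t t' : typing pp G e t -> tle t t' -> typing pp G e t'
| ty_msg m : typing pp G (EMsg m) (Ty Smsg (norm_msg M pp m))
| ty_plain p : typing pp G (EPlain p) (Ty Splain (norm_plain M pp p))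
| ty_op o es (bs : hprod (B M) (op_args M o)) a :
    typings pp G es (op_args M o) bs ->
    op_bnd M o pp bs = Some a ->
    typing pp G (EOp o es) (Ty (op_res M o) a)
with typings (pp : PP M) (G : ctx)
  : list expr -> forall l : list sort, hprod (B M) l -> Prop :=
| tys_nil : typings pp G nil nil tt
| tys_cons e es s l (a : B M s) (bs : hprod (B M) l) :
    typing pp G e (Ty s a) -> typings pp G es l bs ->
    typings pp G (e :: es) (s :: l) (a, bs).

Inductive semty (sp : SP M) : ty -> value -> Prop :=
| semty_intro s (a : B M s) (v : carrier M s) :
    ble M _ (normsp sp v) a -> semty sp (Ty s a) (existT _ s v).

Definition semctx (sp : SP M) (G : ctx) (g : var -> option value) : Prop :=
  forall x t, G x = Some t -> exists v, g x = Some v /\ semty sp t v.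

(* interp^sp_Gamma(gamma): defined on the variables of Gamma.  We use the sort
   of gamma(x), which equals sort(Gamma(x)) whenever sp;Gamma |= gamma. *)
Definition interp_ctx (sp : SP M) (G : ctx) (g : var -> option value)
  : var -> option (carrier M Smsg) :=
  fun x => match G x, g x with
           | Some _, Some v => Some (interp sp (projT2 v))
           | _, _ => None
           end.

End Model.

Arguments normsp {M} sp {s} _.
Arguments interp {M} sp {s} _.
Arguments interp_ctx {M} sp G g _.
Arguments semctx {M} sp G g.
Arguments ceval {M} sp g _ _.
Arguments eval {M} g _ _.
Arguments typing {M} pp G _ _.

(* A logical-relations argument: by mutual induction on typing derivations, a
   well-typed expression evaluates, under a substitution inhabiting its context, to
   a value of its semantic type whose decryption/decoding is the cleartext result.
   Subsumption is handled by transitivity of the bound order; at an operation the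
   arguments' actual bounds lie below the typed ones, so downward closure makes the
   bound function defined on them, and commutativity then gives both the result
   bound and agreement with the cleartext operation. *)


Set Implicit Arguments.

Scheme typing_mut := Induction for typing Sort Prop
  with typings_mut := Induction for typings Sort Prop.

Section Soundness.

Variable M : ILA.
Variable sp : SP M.

Lemma semtyE (t : ty M) (v : value M) :
  semty sp t v ->
  let (s, a) := t in exists x : carrier M s, v = existT _ s x /\ ble M s (normsp sp x) a.
Proof. destruct 1. eauto. Qed.

Lemma semty_tle (t t' : ty M) (v : value M) :
  tle t t' -> semty sp t v -> semty sp t' v.
Proof.
  intros [s a a' Haa'] Hv.
  destruct (semtyE Hv) as [x [-> Hx]].
  constructor. eapply ble_trans; eassumption.
Qed.

Lemma semty_normsp (s : sort) (x : carrier M s) :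
  semty sp (Ty M s (normsp sp x)) (existT _ s x).
Proof. constructor. apply ble_refl. Qed.

Lemma valid_op_sound (o : op M) (vs : hprod (carrier M) (op_args M o))
    (bs : hprod (B M) (op_args M o)) (a : B M (op_res M o)) :
  valid M ->
  op_bnd M o (topub M sp) bs = Some a ->
  hall2 (ble M) (hmap (fun s => @normsp M sp s) vs) bs ->
  ble M _ (normsp sp (op_sem M o vs)) a /\
  interp sp (op_sem M o vs) = op_msg M o (hmap (fun s => @interp M sp s) vs).
Proof.
  intros [Hcomm Hdown] Hbs Hle.
  destruct (Hdown sp o _ _ a Hbs Hle) as [b [Hb Hba]].
  destruct (Hcomm sp o vs b Hb) as [Hres Hinterp].
  split; [eapply ble_trans; eassumption | exact Hinterp].
Qed.

Variable G : ctx M.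
Variable g : var -> option (value M).

Lemma interp_ctx_some (x : var) (t : ty M) (v : value M) :
  G x = Some t -> g x = Some v -> interp_ctx sp G g x = Some (interp sp (projT2 v)).
Proof. intros HG Hg. unfold interp_ctx. rewrite HG, Hg. reflexivity. Qed.

Definition sound_expr (e : expr M) (t : ty M) : Prop :=
  exists v, eval g e v /\ semty sp t v /\
            ceval sp (interp_ctx sp G g) e (interp sp (projT2 v)).

Definition sound_exprs (es : list (expr M)) (l : list sort) (bs : hprod (B M) l) : Prop :=
  exists vs : hprod (carrier M) l,
    evals g es l vs /\
    hall2 (ble M) (hmap (fun s => @normsp M sp s) vs) bs /\
    cevals sp (interp_ctx sp G g) es l (hmap (fun s => @interp M sp s) vs).

Hypothesis Hvalid : valid M.
Hypothesis Hg : semctx sp G g.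

Lemma typing_sound (e : expr M) (t : ty M) :
  typing (topub M sp) G e t -> sound_expr e t.
Proof.
  intros Hty.
  induction Hty using typing_mut with (P0 := fun es l bs _ => @sound_exprs es l bs).
  - destruct (Hg e) as [v [Hx Hv]].
    exists v. split; [|split]; [constructor; exact Hx | exact Hv |].
    constructor. eapply interp_ctx_some; eassumption.
  - destruct IHHty as [v [Hev [Hv Hcev]]].
    exists v. split; [|split]; [exact Hev | eapply semty_tle; eassumption | exact Hcev].
  - exists (existT _ Smsg m). split; [|split]; [constructor | apply semty_normsp | constructor].
  - exists (existT _ Splain p). split; [|split]; [constructor | apply semty_normsp | constructor].
  - destruct IHHty as [vs [Hevs [Hle Hcevs]]].
    destruct (@valid_op_sound o vs bs a Hvalid e Hle) as [Hres Hinterp].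
    exists (existT _ (op_res M o) (op_sem M o vs)). split; [|split].
    + constructor. exact Hevs.
    + constructor. exact Hres.
    + simpl. rewrite Hinterp. constructor. exact Hcevs.
  - exists tt. split; [|split]; constructor.
  - destruct IHHty as [v [Hev [Hv Hcev]]].
    destruct IHHty0 as [vs [Hevs [Hle Hcevs]]].
    destruct (semtyE Hv) as [x [-> Hx]].
    exists (x, vs). split; [|split]; try constructor; assumption.
Qed.

End Soundness.

Theorem mainTheorem3 (M : ILA) (Hvalid : valid M) (sp : SP M)
  (G : ctx M) (e : expr M) (t : ty M) (g : var -> option (value M)) :
  typing (topub M sp) G e t ->
  semctx sp G g ->
  exists (v : value M) (vm : carrier M Smsg),
    eval g e v /\
    ceval sp (interp_ctx sp G g) e vm /\
    interp sp (projT2 v) = vm.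
Proof.
  intros Hty Hg.
  destruct (typing_sound Hvalid Hg Hty) as [v [Hev [_ Hcev]]].
  exists v, (interp sp (projT2 v)). auto.
Qed.
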